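(* Let $n,p\ge1$ be integers, let $\mathbf{A}^{p+1}_{n+1}$ be as defined in the context, and let $k=\max\{n+1,p\}$. Then $k.a\vee k.(\sim a)=\top$ for every $a\in A$, whereas there exists $a\in A$ with $n.a\vee n.(\sim a)\ne\top$. That is, $\mathbf{A}^{p+1}_{n+1}$ satisfies the identity $k.x\vee k.\neg x\approx\top$ but not the identity $n.x\vee n.\neg x\approx\top$.
   Context: Order $\mathbb{Z}\times\mathbb{Z}$ lexicographically: $(m,r)\preccurlyeq(k,s)$ iff $m<k$, or $m=k$ and $r\le s$; addition/subtraction of pairs is componentwise, and $\min,\max$ of pairs refer to $\preccurlyeq$. For an integer $n\ge1$ let $L^\omega_{n+1}=\{(m,r)\in\mathbb{Z}^2:(0,0)\preccurlyeq(m,r)\preccurlyeq(n,0)\}$ with $x\ast y=\max\{(0,0),x+y-(n,0)\}$ and $x\to y=\min\{(n,0),(n,0)-x+y\}$. For an integer $p\ge1$ let $L_{p+1}=\{0,1,\dots,p\}$ with $\alpha\ast\beta=\max\{0,\alpha+\beta-p\}$. Define $$A=A^{p+1}_{n+1}=\{\langle(m,r),\alpha\rangle:(m,r)\in L^\omega_{n+1},\ \alpha\in\{0,p\}\}\cup\{\langle(m,r),\alpha\rangle:(0,0)\preccurlyeq(m,r)\preccurlyeq(n-1,0),\ 0<\alpha<p\}.$$ Order: $\langle(m,r),\alpha\rangle\le\langle(k,s),\beta\rangle$ iff one of: (o1) $\alpha\neq0$, $\alpha\le\beta$ and $(m,r)\preccurlyeq(k,s)$; (o2) $\alpha=\beta=0$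 and $(k,s)\preccurlyeq(m,r)$; (o3) $\alpha=0$, $\beta\ne0$ and $(n-1,0)\preccurlyeq(m+k,r+s)$. $\wedge,\vee$ denote meet and join for $\le$. Put $\bot=\langle(n,0),0\rangle$, $\top=\langle(n,0),p\rangle$. For $a=\langle(m,r),\alpha\rangle$, $b=\langle(k,s),\beta\rangle\in A$ define $a\odot b$ by: (P1) if $\alpha,\beta\ge1$ and $\alpha+\beta>p$: $a\odot b=\langle(m,r)\ast(k,s),\alpha+\beta-p\rangle$; (P2) if $\alpha,\beta\ge1$ and $\alpha+\beta\le p$: $a\odot b=\langle\min\{(n,0),(2n-(m+k+1),-(r+s))\},0\rangle$; (P3) if $\alpha\ge1$, $\beta=0$: $a\odot b=\langle(m,r)\to(k,s),0\rangle$, and if $\alpha=0$, $\beta\ge1$: $a\odot b=\langle(k,s)\to(m,r),0\rangle$; (P4) if $\alpha=\beta=0$: $a\odot b=\langle\min\{(n,0),(m+k+1,r+s)\},0\rangle$. Define $\sim\langle(m,r),\alpha\rangle=\langle(m,r),p-\alpha\rangle$ if $\alpha\in\{0,p\}$, and $\sim\langle(m,r),\alpha\rangle=\langle(n-1-m,-r),p-\alpha\rangle$ if $0<\alpha<p$. Define $a\Rightarrow b=\sim(a\odot\sim b)$ (so $\sim a=a\Rightarrow\bot$, interpreting $\neg x=x\to\bot$). The algebra $\mathbf{A}^{p+1}_{n+1}$ is $\langle A;\odot,\Rightarrow,\wedge,\vee,\bot,\top\rangle$. Terms: $a^0=\top$, $a^{k+1}=a\odot a^k$; $a\oplus b=\sim(\sim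 a\odot\sim b)$; $0.a=\bot$, $(k+1).a=a\oplus k.a$. *)

From Stdlib Require Import ZArith Lia Bool.
Open Scope Z_scope.

Definition pair := (Z * Z)%type.

Definition lexle (x y : pair) : Prop :=
  fst x < fst y \/ (fst x = fst y /\ snd x <= snd y).

Definition lexleb (x y : pair) : bool :=
  (fst x <? fst y) || ((fst x =? fst y) && (snd x <=? snd y)).

Definition pmin (x y : pair) : pair := if lexleb x y then x else y.
Definition pmax (x y : pair) : pair := if lexleb x y then y else x.
Definition padd (x y : pair) : pair := (fst x + fst y, snd x + snd y).
Definition psub (x y : pair) : pair := (fst x - fst y, snd x - snd y).

(* operations of L^omega_{n+1} *)
Definition ast (n : Z) (x y : pair) : pair := pmax (0, 0) (psub (padd x y) (n, 0)).
Definition arr (n : Z) (x y : pair) : pair := pmin (n, 0) (padd (psub (n, 0) x) y).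

Definition elt := (pair * Z)%type.

Definition inA (n p : Z) (a : elt) : Prop :=
  let '(x, al) := a in
  ((al = 0 \/ al = p) /\ lexle (0, 0) x /\ lexle x (n, 0)) \/
  (0 < al < p /\ lexle (0, 0) x /\ lexle x (n - 1, 0)).

Definition leA (n : Z) (a b : elt) : Prop :=
  let '(x, al) := a in let '(y, be) := b in
  (al <> 0 /\ al <= be /\ lexle x y) \/
  (al = 0 /\ be = 0 /\ lexle y x) \/
  (al = 0 /\ be <> 0 /\ lexle (n - 1, 0) (padd x y)).

Definition botA (n : Z) : elt := ((n, 0), 0).
Definition topA (n p : Z) : elt := ((n, 0), p).

Definition is_join (n p : Z) (a b z : elt) : Prop :=
  inA n p z /\ leA n a z /\ leA n b z /\
  (forall w, inA n p w -> leA n a w -> leA n b w -> leA n z w).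

Definition odot (n p : Z) (a b : elt) : elt :=
  let '(x, al) := a in let '(y, be) := b in
  if (1 <=? al) && (1 <=? be) then
    if p <? al + be then (ast n x y, al + be - p)
    else (pmin (n, 0) (2 * n - (fst x + fst y + 1), - (snd x + snd y)), 0)
  else if (1 <=? al) then (arr n x y, 0)
  else if (1 <=? be) then (arr n y x, 0)
  else (pmin (n, 0) (fst x + fst y + 1, snd x + snd y), 0).

Definition negA (n p : Z) (a : elt) : elt :=
  let '(x, al) := a in
  if (al =? 0) || (al =? p) then (x, p - al)
  else ((n - 1 - fst x, - snd x), p - al).

Definition oplus (n p : Z) (a b : elt) : elt :=
  negA n p (odot n p (negA n p a) (negA n p b)).

Fixpoint nmul (n p : Z) (k : nat) (a : elt) : elt :=
  match k with
  | O => botA n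
  | S k' => oplus n p a (nmul n p k' a)
  end.

(* Summing two elements of positive levels adds the levels (capped at p) and
   adds the pairs plus (1, 0) (capped at (n - 1, 0) below level p and at (n, 0)
   on level p), so k.a = top as soon as a has positive level, k >= p and
   k >= n + 1; and k.a always stays in A, hence below top. As a and ~a have
   levels al and p - al, one of them has positive level, which gives
   k.a v k.~a = top. For a = <(0,0),0> we get n.a = a and
   n.~a = <(n - 1, 0), p>, which is already above a but still below top. *)

From Stdlib Require Import ZArith Lia.
Open Scope Z_scope.

Ltac split_comparisons :=
  repeat (match goal with
  | |- context [Z.ltb ?a ?b] => destruct (Z.ltb_spec a b)
  | |- context [Z.leb ?a ?b] => destruct (Z.leb_spec a b)
  | |- context [Z.eqb ?a ?b] => destruct (Z.eqb_spec a b)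
  end; cbn [andb orb negb fst snd] in *; try (exfalso; lia)).

Ltac lex_lia :=
  unfold inA, leA, oplus, negA, odot, ast, arr, pmin, pmax, psub, padd,
    lexle, lexleb, botA, topA in *;
  cbn [fst snd] in *; split_comparisons;
  try (apply pair_equal_spec; split); try (apply pair_equal_spec; split);
  lia.

Definition level_cap (n p al : Z) : pair := if al <? p then (n - 1, 0) else (n, 0).

Lemma oplus_pos_levels n p x y al be : 0 < al <= p -> 0 < be <= p ->
  oplus n p (x, al) (y, be) =
  (pmin (level_cap n p (al + be)) (fst x + fst y + 1, snd x + snd y), Z.min (al + be) p).
Proof. destruct x, y; intros; unfold level_cap; lex_lia. Qed.

Lemma oplus_zero_levels n p x y : 0 < p -> oplus n p (x, 0) (y, 0) = (ast n x y, 0).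
Proof. destruct x, y; intros; lex_lia. Qed.

Lemma oplus_botA_r n p a : 0 < p -> inA n p a -> oplus n p a (botA n) = a.
Proof. destruct a as [[m r] al]; intros; lex_lia. Qed.

Lemma negA_inA n p a : inA n p a -> inA n p (negA n p a).
Proof. destruct a as [[m r] al]; intros; lex_lia. Qed.

Lemma negA_level n p a : snd (negA n p a) = p - snd a.
Proof. destruct a as [[m r] al]; unfold negA; split_comparisons; reflexivity. Qed.

Lemma topA_inA n p : 0 <= n -> 0 <= p -> inA n p (topA n p).
Proof. intros; lex_lia. Qed.

Lemma leA_topA n p a : 0 < p -> inA n p a -> leA n a (topA n p).
Proof. destruct a as [[m r] al]; intros; lex_lia. Qed.

Lemma is_join_topA n p b c : 0 <= n -> 0 < p -> inA n p b -> inA n p c ->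
  b = topA n p \/ c = topA n p -> is_join n p b c (topA n p).
Proof.
  intros Hn Hp Hb Hc Htop.
  repeat split; auto using topA_inA, leA_topA with zarith.
  intros w _ Hbw Hcw. destruct Htop as [-> | ->]; assumption.
Qed.

Lemma nmul_zero_level_inA n p x j : 0 <= n -> 0 < p -> inA n p (x, 0) ->
  exists y, nmul n p j (x, 0) = (y, 0) /\ inA n p (y, 0).
Proof.
  intros Hn Hp Hx. induction j as [|j [y [Ey Hy]]].
  - exists (n, 0). split; [reflexivity | lex_lia].
  - cbn [nmul]. rewrite Ey, oplus_zero_levels by exact Hp.
    eexists; split; [reflexivity|]. destruct x, y; lex_lia.
Qed.

Lemma inA_pos_level n p x al : 0 < al ->
  inA n p (x, al) <-> al <= p /\ lexle (0, 0) x /\ lexle x (level_cap n p al).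
Proof. destruct x; intros; unfold level_cap; lex_lia. Qed.

Lemma oplus_pos_inA n p x y al be : 1 <= n -> 0 < al -> 0 < be ->
  inA n p (x, al) -> inA n p (y, be) -> inA n p (oplus n p (x, al) (y, be)).
Proof.
  intros Hn Hal Hbe Hx Hy.
  apply inA_pos_level in Hx as [Halp [Hx0 _]]; [|exact Hal].
  apply inA_pos_level in Hy as [Hbep [Hy0 _]]; [|exact Hbe].
  rewrite oplus_pos_levels, inA_pos_level by lia.
  destruct x, y; unfold level_cap; lex_lia.
Qed.

Lemma nmul_pos_level_bounds n p x al j : 1 <= n -> 0 < al -> inA n p (x, al) ->
  (1 <= j)%nat ->
  exists y be, nmul n p j (x, al) = (y, be) /\ inA n p (y, be) /\
    Z.min (Z.of_nat j) p <= be /\ lexle (Z.min (Z.of_nat j - 1) (n - 1), 0) y.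
Proof.
  intros Hn Hal Hx Hj. induction j as [|j IH]; [lia|].
  pose proof Hx as [Halp [Hx0 _]]%inA_pos_level; [|exact Hal].
  destruct j as [|j].
  - exists x, al. cbn [nmul]. rewrite oplus_botA_r by (auto; lia).
    repeat split; auto; destruct x; lex_lia.
  - destruct (IH ltac:(lia)) as [y [be [Ey [Hy [Hbe Hlow]]]]].
    assert (Hsum : inA n p (oplus n p (x, al) (y, be)))
      by (apply oplus_pos_inA; auto; lia).
    change (nmul n p (S (S j)) (x, al)) with (oplus n p (x, al) (nmul n p (S j) (x, al))).
    pose proof Hy as [Hbep _]%inA_pos_level; [|lia].
    rewrite Ey. rewrite oplus_pos_levels in * by lia.
    do 2 eexists; split; [reflexivity|].
    split; [exact Hsum|]. split; [lia|].
    clear - Hn Hx0 Hlow. destruct x, y; unfold level_cap; lex_lia.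
Qed.

Lemma nmul_inA n p a j : 1 <= n -> 0 < p -> inA n p a -> inA n p (nmul n p j a).
Proof.
  destruct a as [x al]; intros Hn Hp Ha.
  destruct (Z.eq_dec al 0) as [-> | Hal].
  - destruct (nmul_zero_level_inA n p x j) as [y [-> Hy]]; auto; lia.
  - destruct j as [|j]; [cbn; lex_lia|].
    destruct (nmul_pos_level_bounds n p x al (S j)) as [y [be [-> [Hy _]]]];
      auto; try lia. destruct x; lex_lia.
Qed.

Lemma nmul_pos_topA n p x al k : 1 <= n -> 0 < al -> inA n p (x, al) ->
  n + 1 <= Z.of_nat k -> p <= Z.of_nat k -> nmul n p k (x, al) = topA n p.
Proof.
  intros Hn Hal Hx Hkn Hkp. destruct k as [|k]; [lia|].
  destruct (nmul_pos_level_bounds n p x al k) as [y [be [Ey [Hy [Hbe Hlow]]]]];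
    auto; try lia.
  change (nmul n p (S k) (x, al)) with (oplus n p (x, al) (nmul n p k (x, al))).
  rewrite Ey, oplus_pos_levels by (destruct x; lex_lia).
  destruct x, y; unfold level_cap; lex_lia.
Qed.

Lemma nmul_zero_origin n p j : 1 <= n -> 0 < p -> (1 <= j)%nat ->
  nmul n p j ((0, 0), 0) = ((0, 0), 0).
Proof.
  intros Hn Hp Hj. induction j as [|j IH]; [lia|].
  cbn [nmul]. destruct j as [|j].
  - apply oplus_botA_r; auto; lex_lia.
  - rewrite IH, oplus_zero_levels by lia. lex_lia.
Qed.

Lemma nmul_top_origin n p j : 1 <= n -> 0 < p -> (1 <= j)%nat -> Z.of_nat j <= n ->
  nmul n p j ((0, 0), p) = ((Z.of_nat j - 1, 0), p).
Proof.
  intros Hn Hp Hj Hjn. induction j as [|j IH]; [lia|].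
  cbn [nmul]. destruct j as [|j].
  - rewrite oplus_botA_r by (auto; lex_lia). reflexivity.
  - rewrite IH, oplus_pos_levels by lia. unfold level_cap; lex_lia.
Qed.

Lemma nmul_excluded_middle_topA n p a k : 1 <= n -> 0 < p -> inA n p a ->
  n + 1 <= Z.of_nat k -> p <= Z.of_nat k ->
  is_join n p (nmul n p k a) (nmul n p k (negA n p a)) (topA n p).
Proof.
  intros Hn Hp Ha Hkn Hkp.
  apply is_join_topA; auto using nmul_inA, negA_inA; try lia.
  destruct a as [x al].
  destruct (Z.eq_dec al 0) as [-> | Hal].
  - right. pose proof (negA_level n p (x, 0)) as Hlev.
    pose proof (negA_inA n p _ Ha) as Hneg.
    destruct (negA n p (x, 0)) as [x' al']. cbn in Hlev.
    apply nmul_pos_topA; auto; lia.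
  - left. apply nmul_pos_topA; auto; lex_lia.
Qed.

Lemma nmul_excluded_middle_origin n p j : 1 <= n -> 0 < p -> (1 <= j)%nat ->
  Z.of_nat j = n ->
  is_join n p (nmul n p j ((0, 0), 0)) (nmul n p j (negA n p ((0, 0), 0))) ((n - 1, 0), p).
Proof.
  intros Hn Hp Hj Hjn.
  replace (negA n p ((0, 0), 0)) with (((0, 0), p) : elt) by lex_lia.
  rewrite nmul_zero_origin, nmul_top_origin, Hjn by lia.
  repeat split; try lex_lia. intros w _ _ Hw. exact Hw.
Qed.

Theorem mainTheorem16 (n p : nat) (hn : (1 <= n)%nat) (hp : (1 <= p)%nat) :
  let N := Z.of_nat n in
  let P := Z.of_nat p in
  let k := Nat.max (n + 1) p in
  (forall a, inA N P a ->
     is_join N P (nmul N P k a) (nmul N P k (negA N P a)) (topA N P)) /\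
  (exists a, inA N P a /\
     exists z, is_join N P (nmul N P n a) (nmul N P n (negA N P a)) z /\
               z <> topA N P).
Proof.
  intros N P k. split.
  - intros a Ha. apply nmul_excluded_middle_topA; auto; lia.
  - exists ((0, 0), 0). split; [lex_lia|].
    exists ((N - 1, 0), P). split.
    + apply nmul_excluded_middle_origin; auto; lia.
    + unfold topA. intros [= Hcontra]. lia.
Qed.
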